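(* Let $q$ be a power of a prime $p$. Let $a,d$ be positive integers and $s\ge1$ such that $L=\{a,a+d,\ldots,a+(s-1)d\}\subseteq[q-1]$. Let $\mathcal{F}\subseteq 2^{[n]}$ be $q$-modular $L$-differencing Sperner. If $$\sum_{\ell\in L}v_p(\ell)<\max\{(s-1)v_p(d)+v_p(q),\; s\,v_p(d)+v_p(s!)+1\},$$ then $|\mathcal{F}|\le\sum_{i=0}^{s}\binom{n}{i}$.
   Context: $[n]=\{1,\ldots,n\}$, $[q-1]=\{1,\ldots,q-1\}$, and $2^{[n]}$ is the family of all subsets of $[n]$. For a prime $p$ and integer $m$, $v_p(m)$ is the largest nonnegative integer $k$ with $p^k\mid m$ ($v_p(0)=+\infty$). For a positive integer $m$ and $L\subseteq\mathbb{Z}$, write $r\in L\pmod m$ if $r\equiv\ell\pmod m$ for some $\ell\in L$. For $L\subseteq[q-1]$, a family $\mathcal{F}\subseteq 2^{[n]}$ is $q$-modular $L$-differencing Sperner if $|A\setminus B|\in L\pmod q$ for all distinct $A,B\in\mathcal{F}$. *)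

From mathcomp Require Import all_boot.
Set Implicit Arguments. Unset Strict Implicit. Unset Printing Implicit Defensive.

Definition vp (p m : nat) : nat := logn p m.

Definition arith_prog (a d s : nat) : seq nat := [seq a + i * d | i <- iota 0 s].

Definition in_mod (r : nat) (L : seq nat) (m : nat) : bool :=
  has (fun l => r == l %[mod m]) L.

Definition mod_L_diff_sperner (n q : nat) (L : seq nat) (F : {set {set 'I_n}}) : Prop :=
  forall A B, A \in F -> B \in F -> A != B -> in_mod #|A :\: B| L q.

From mathcomp Require Import all_boot all_algebra cyclic zify.
Set Implicit Arguments. Unset Strict Implicit. Unset Printing Implicit Defensive.
Import GRing.Theory.

(* For A in F let f_A(x) = prod_(l in L) (|A \ x| - l), a rational-valued function
   of the subsets x of [n].  Since |A \ x| = sum_(i in A) [i \notin x], f_A is a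
   polynomial of degree s in the functions x |-> [Z and x are disjoint], |Z| <= 1,
   hence lies in the span of those with |Z| <= s, of dimension sum_(i <= s) C(n, i).
   The matrix (f_A(B)) on F is nonsingular by a p-adic argument: its diagonal
   entries prod_l (-l) have valuation exactly V = sum_l v_p(l), while off the
   diagonal |A \ B| is either in L or equal to tq + a + jd with t > 0, and then the
   product of the tq + (j - i)d has valuation > V.  Under the first bound this is
   because the j-th factor is divisible by q and the others by p^(v_p(d)); under the
   second, after removing p^(v_p(d)) from each factor, one is left with s terms of a
   progression with difference prime to p, one of them divisible by a power of p
   exceeding s, and such a product is divisible by p^(v_p(s!) + 1). *)

Lemma prime_dvd_bin_small p N z s :
  prime p -> z %% p ^ N < s -> s < p ^ N -> p %| 'C(z, s).
Proof.
move=> pp; rewrite {2}(divn_eq z (p ^ N)); move: (z %/ _) (z %% _) => c r.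
elim: r s => [|r IH] [|s] // rs sN; last by rewrite addnS binS dvdn_add // IH //; lia.
rewrite addn0; apply/negPn/negP => ndiv.
have cop : coprime (p ^ N) 'C(c * p ^ N, s.+1).
  by rewrite coprime_pexpl ?prime_coprime // lt0n; apply: contraTneq sN => ->; rewrite expn0.
have : p ^ N %| s.+1 * 'C(c * p ^ N, s.+1) by rewrite -mul_bin_diag dvdn_mulr // dvdn_mull.
by rewrite Gauss_dvdl // => /dvdn_leq; lia.
Qed.

Lemma dvdn_ffact_small p N z s :
  prime p -> z %% p ^ N < s -> s < p ^ N -> p ^ (logn p s`!).+1 %| z ^_ s.
Proof.
by move=> pp zs sN; rewrite -bin_ffact expnS dvdn_mul ?pfactor_dvdnn ?(prime_dvd_bin_small pp zs).
Qed.

Lemma modn_prod_congr (I : Type) (r : seq I) (P : pred I) (f g : I -> nat) m :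
  (forall i, P i -> f i = g i %[mod m]) ->
  \prod_(i <- r | P i) f i = \prod_(i <- r | P i) g i %[mod m].
Proof.
move=> fg; apply: (big_ind2 (fun x y => x = y %[mod m])) => // x1 x2 y1 y2 e1 e2.
by rewrite -modnMm e1 e2 modnMm.
Qed.

Lemma modn_inv_exists d m : coprime d m -> exists u, u * d = 1 %[mod m].
Proof.
case: m => [|m] cdm; first by exists 1; move: cdm; rewrite /coprime gcdn0 => /eqP->.
by exists (d ^ (totient m.+1).-1); rewrite -expnSr prednK ?totient_gt0 // Euler_exp_totient.
Qed.

Lemma dvdn_prod_coprime_ap p N d y j s :
  prime p -> coprime p d -> j < s -> s < p ^ N -> y = j * d %[mod p ^ N] ->
  p ^ (logn p s`!).+1 %| \prod_(i < s) (y - i * d).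
Proof.
move=> pp pd js sN yj; set w := (logn p s`!).+1; set P := p ^ (N + w).
have P0 : 0 < P by rewrite expn_gt0 prime_gt0.
(* If some factor is truncated to 0 there is nothing to prove. *)
have [ys | sy] := ltnP y (s.-1 * d).
  have ls : s.-1 < s by lia.
  by rewrite (bigD1 (Ordinal ls)) //= (_ : y - _ = 0) ?mul0n //; apply/eqP; rewrite subn_eq0 ltnW.
have [u ud] : exists u, u * d = 1 %[mod P].
  by apply: modn_inv_exists; rewrite coprime_sym coprimeXl.
(* z = y / d (mod P), so the product is d ^ s * z ^_ s = d ^ s * s`! * 'C(z, s) (mod P). *)
set z := u * y + s * P.
have zj : z %% p ^ N = j.
  have pNP : p ^ N %| P by rewrite dvdn_exp2l ?leq_addr.
  rewrite /z -modnDmr (eqP (dvdn_mull s pNP)) addn0 -modnMmr yj modnMmr mulnCA -modnMmr.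
  by rewrite -(modn_dvdm (u * d) pNP) ud (modn_dvdm 1 pNP) modnMmr muln1 modn_small ?(ltn_trans js).
have dz i : i < s -> d * (z - i) = y - i * d %[mod P].
  move=> lt_is; have iz : i <= z.
    by rewrite (leq_trans (ltnW lt_is)) // (leq_trans (leq_pmulr s P0)) ?leq_addl.
  have idy : i * d <= y.
    by apply: leq_trans sy; rewrite leq_mul2r -ltnS (ltn_predK lt_is) lt_is orbT.
  apply/eqP; rewrite -(eqn_modDr (i * d)) subnK // mulnC mulnBl subnK ?leq_mul2r ?iz ?orbT //.
  by rewrite /z mulnDl (mulnAC s) addnC modnMDl (mulnAC u) -modnMml ud modnMml mul1n.
have : p ^ w %| \prod_(i < s) (d * (z - i)).
  by rewrite big_split /= -ffact_prod dvdn_mull // (dvdn_ffact_small (N := N) pp) ?zj.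
have pwP : p ^ w %| P by rewrite dvdn_exp2l ?leq_addl.
rewrite /dvdn -(modn_dvdm _ pwP) (modn_prod_congr _ (fun i _ => dz _ (ltn_ord i))).
by rewrite (modn_dvdm _ pwP).
Qed.

Lemma expn_card_dvdn_prod (I : finType) (P : pred I) g (f : I -> nat) :
  (forall i, P i -> g %| f i) -> g ^ #|P| %| \prod_(i | P i) f i.
Proof.
move=> gf; rewrite -prod_nat_const.
by apply: (big_ind2 (fun x y => x %| y)) => // x1 x2 y1 y2; apply: dvdn_mul.
Qed.

Lemma dvdn_prod_shift_common g q d t j s :
  g %| d -> g %| q -> j < s -> q * g ^ s.-1 %| \prod_(i < s) (t * q + j * d - i * d).
Proof.
move=> gd gq js; rewrite (bigD1 (Ordinal js)) //= addnK dvdn_mul ?dvdn_mull //.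
have := @expn_card_dvdn_prod _ [pred i : 'I_s | i != Ordinal js] g.
rewrite cardC1 card_ord; apply=> i _.
by rewrite dvdn_sub ?dvdn_add ?dvdn_mull.
Qed.

Lemma logn_lt_pow p m k : prime p -> 0 < m -> m < p ^ k -> logn p m < k.
Proof.
move=> pp m0 mk; rewrite -(ltn_exp2l _ _ (prime_gt1 pp)).
exact: leq_ltn_trans (dvdn_leq m0 (pfactor_dvdnn p m)) mk.
Qed.

Lemma logn_addMpow_lt p a e i : prime p -> 0 < a < p ^ e -> logn p (a + i * p ^ e) < e.
Proof.
move=> pp /andP[a0 ae]; rewrite ltnNge -pfactor_dvdn ?addn_gt0 ?a0 //.
by rewrite dvdn_addl ?dvdn_mull //; apply: contraTN ae => /dvdn_leq; rewrite -leqNgt; apply.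
Qed.

Lemma prog_lt_mul_unit a d m M s :
  0 < a -> 0 < d -> 1 < s -> M <= s -> a + s.-1 * (d * m) < m * M -> d = 1 /\ a < m.
Proof.
move=> a0 d0 s1 Ms lt; have mMs : m * M <= m * s by rewrite leq_mul2l Ms orbT.
have d1 : d = 1.
  apply/eqP; rewrite eqn_leq d0 andbT leqNgt; apply/negP => d2.
  have sd : s <= s.-1 * d by apply: leq_trans (leq_mul (leqnn _) d2); lia.
  have := leq_trans mMs (leq_mul (leqnn m) sd); rewrite mulnCA mulnA; lia.
split=> //; move: lt mMs; rewrite d1 mul1n -{2}(ltn_predK s1) mulnS; lia.
Qed.

Lemma prog_length_lt_pow p k a d s :
  prime p -> 0 < a -> 0 < d -> 1 < s -> a + s.-1 * d < p ^ k -> logn p d < k ->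
  s.-1 * logn p d + k <= \sum_(i < s) logn p (a + i * d) ->
  s < p ^ (k - logn p d).
Proof.
move=> pp a0 d0 s1 lastq ek VB; have [d' _ dE] := pfactor_coprime pp d0.
move: (logn p d) ek VB dE => e ek VB dE; rewrite ltnNge; apply/negP => Ns.
have [d'1 ae] : d' = 1 /\ a < p ^ e.
  apply: (prog_lt_mul_unit a0 _ s1 Ns); first by move: d0; rewrite dE muln_gt0 => /andP[].
  by rewrite -expnD subnKC ?(ltnW ek) // -dE.
have : \sum_(i < s) (logn p (a + i * d)).+1 <= \sum_(i < s) e.
  by apply: leq_sum => i _; rewrite dE d'1 mul1n logn_addMpow_lt ?a0.
rewrite sum_nat_const card_ord; under eq_bigr do rewrite -addn1.
rewrite big_split sum_nat_const card_ord /= muln1.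
have : s * e = s.-1 * e + e by rewrite -{1}(ltn_predK s1) mulSn addnC.
move: VB; set V := \sum_(i < s) _; lia.
Qed.

Lemma dvdn_prod_prog_shift_coprime p k a d s j t :
  prime p -> 0 < a -> 0 < d -> 1 < s -> a + s.-1 * d < p ^ k -> logn p d < k -> j < s ->
  s.-1 * logn p d + k <= \sum_(i < s) logn p (a + i * d) ->
  p ^ (s * logn p d + (logn p s`!).+1) %| \prod_(i < s) (t * p ^ k + j * d - i * d).
Proof.
move=> pp a0 d0 s1 lastq ek js VB.
have sN := prog_length_lt_pow pp a0 d0 s1 lastq ek VB.
have [d' pd' dE] := pfactor_coprime pp d0.
set e := logn p d in ek sN dE *; set N := k - e in sN.
have kE : p ^ k = p ^ e * p ^ N by rewrite -expnD subnKC // ltnW.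
have -> : \prod_(i < s) (t * p ^ k + j * d - i * d) =
          p ^ (s * e) * \prod_(i < s) (t * p ^ N + j * d' - i * d').
  rewrite [s * e]mulnC expnM -[X in (p ^ e) ^ X](card_ord s) -prod_nat_const -big_split /=.
  by apply: eq_bigr => i _; rewrite kE dE mulnBr mulnDr; congr (_ + _ - _); lia.
rewrite expnD dvdn_pmul2l ?expn_gt0 ?prime_gt0 //.
by apply: (dvdn_prod_coprime_ap pp pd' js sN); rewrite modnMDl.
Qed.

Lemma dvdn_prod_prog_shift p k a d s j t :
  prime p -> 0 < a -> 0 < d -> a + s.-1 * d < p ^ k -> j < s ->
  \sum_(i < s) logn p (a + i * d) <
    maxn (s.-1 * logn p d + k) (s * logn p d + logn p s`! + 1) ->
  p ^ (\sum_(i < s) logn p (a + i * d)).+1 %| \prod_(i < s) (t * p ^ k + j * d - i * d).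
Proof.
move=> pp a0 d0 lastq js Vlt; have [s1 | s2] := leqP s 1.
  have s1E : s = 1 by lia.
  apply: (dvdn_trans _ (dvdn_prod_shift_common t (dvd1n d) (dvd1n (p ^ k)) js)).
  rewrite exp1n muln1 dvdn_exp2l // s1E big_ord1 mul0n addn0 (logn_lt_pow pp a0) //.
  by move: lastq; rewrite s1E mul0n addn0.
set V := \sum_(i < s) _ in Vlt *; set e := logn p d in Vlt *.
have ek : e < k.
  apply: (logn_lt_pow pp d0); apply: leq_ltn_trans lastq.
  by apply: leq_trans (leq_addl a _); rewrite leq_pmull ?ltn_predRL.
have [VA | VB] := ltnP V (s.-1 * e + k).
  apply: (dvdn_trans _ (dvdn_prod_shift_common t (pfactor_dvdnn p d) (dvdn_exp2l p (ltnW ek)) js)).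
  by rewrite -expnM -expnD dvdn_exp2l // addnC mulnC.
apply: (dvdn_trans _ (dvdn_prod_prog_shift_coprime t pp a0 d0 s2 lastq ek js VB)).
by rewrite dvdn_exp2l //; move: Vlt; rewrite leq_max => /orP[]; lia.
Qed.

Definition gap_prod (L : seq nat) (m : nat) : int := \prod_(l <- L) (m%:Z - l%:Z)%R.

Lemma big_arith_prog (R : Type) (idx : R) (op : Monoid.law idx) a d s (F : nat -> R) :
  \big[op/idx]_(l <- arith_prog a d s) F l = \big[op/idx]_(i < s) F (a + i * d).
Proof. by rewrite big_map -{1}(subn0 s) -/(index_iota 0 s) big_mkord. Qed.

Lemma logn_prod (I : Type) (r : seq I) (P : pred I) (F : I -> nat) p :
  (forall i, 0 < F i) -> logn p (\prod_(i <- r | P i) F i) = \sum_(i <- r | P i) logn p (F i).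
Proof.
move=> F0; apply: (proj2 (big_ind2 (fun x y => 0 < x /\ logn p x = y) _ _ _)) => [|x1 x2 y1 y2|i _].
- by rewrite logn1.
- by move=> [x10 <-] [x20 <-]; rewrite muln_gt0 x10 x20 lognM.
- by rewrite F0.
Qed.

Lemma gap_prod_eq0 L m : m \in L -> gap_prod L m = 0%R.
Proof. by move=> mL; apply/eqP; rewrite prodf_seq_eq0; apply/hasP; exists m; rewrite ?subrr. Qed.

Lemma abs_gap_prod L m : `|gap_prod L m|%N = \prod_(l <- L) `|m - l|%N.
Proof. by rewrite /gap_prod; elim: L => [|l L IH]; rewrite ?big_nil ?big_cons ?abszM ?IH. Qed.

Lemma abs_gap_prod0 L : `|gap_prod L 0|%N = \prod_(l <- L) l.
Proof. by rewrite abs_gap_prod; apply: eq_bigr => l _; rewrite dist0n. Qed.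

Lemma gap_prod_prog0_pfactor p a d s :
  prime p -> 0 < a ->
  ((p ^ (\sum_(i < s) logn p (a + i * d)))%N%:Z %| gap_prod (arith_prog a d s) 0)%Z &&
  ~~ ((p ^ (\sum_(i < s) logn p (a + i * d)).+1)%N%:Z %| gap_prod (arith_prog a d s) 0)%Z.
Proof.
move=> pp a0; have ad0 i : 0 < a + i * d by rewrite addn_gt0 a0.
rewrite !dvdzE abs_gap_prod0 big_arith_prog /=.
by rewrite !pfactor_dvdn ?prodn_gt0 // logn_prod // leqnn ltnn.
Qed.

Lemma dvdz_gap_prod_prog p k a d s m :
  prime p -> 0 < a -> 0 < d -> a + s.-1 * d < p ^ k ->
  in_mod m (arith_prog a d s) (p ^ k) ->
  \sum_(i < s) logn p (a + i * d) <
    maxn (s.-1 * logn p d + k) (s * logn p d + logn p s`! + 1) ->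
  ((p ^ (\sum_(i < s) logn p (a + i * d)).+1)%N%:Z %| gap_prod (arith_prog a d s) m)%Z.
Proof.
move=> pp a0 d0 lastq /hasP[l /mapP[j]]; rewrite mem_iota add0n => /andP[_ js] -> /eqP mj Vlt.
have [mL | mNL] := boolP (m \in arith_prog a d s).
  by rewrite gap_prod_eq0 ?dvdz0.
have lq i : i < s -> a + i * d < p ^ k.
  move=> lt_is; apply: leq_ltn_trans lastq.
  by rewrite leq_add2l leq_mul2r -ltnS (ltn_predK lt_is) lt_is orbT.
set t := m %/ p ^ k; have mE : m = t * p ^ k + (a + j * d).
  by rewrite {1}(divn_eq m (p ^ k)) mj modn_small ?lq.
have t0 : 0 < t.
  by rewrite lt0n; apply: contraNneq mNL => t0; rewrite mE t0 add0n; apply: map_f; rewrite mem_iota.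
rewrite dvdzE abs_gap_prod big_arith_prog /=.
suff -> : \prod_(i < s) `|m - (a + i * d)|%N = \prod_(i < s) (t * p ^ k + j * d - i * d).
  exact: dvdn_prod_prog_shift.
apply: eq_bigr => i _; rewrite distnEl mE addnCA ?subnDl // leq_add2l.
apply: leq_trans (leq_addr _ _); apply: leq_trans (leq_pmull _ t0).
exact: ltnW (leq_ltn_trans (leq_addl a _) (lq _ (ltn_ord i))).
Qed.

Section AvoidSpan.
Local Open Scope ring_scope.
Variable n : nat.
Local Notation setfun := {ffun {set 'I_n} -> rat^o}.

(* The monomial prod_(i in Z) (1 - x_i) evaluated at the indicator vector of x. *)
Definition avoid (Z : {set 'I_n}) : setfun := [ffun x => (Z :&: x == set0)%:R].
Definition small_sets r := [set Z : {set 'I_n} | (#|Z| <= r)%N].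
Definition avoid_span r := <<[seq avoid Z | Z <- enum (small_sets r)]>>%VS.

Lemma card_small_sets r : #|small_sets r| = (\sum_(0 <= i < r.+1) 'C(n, i))%N.
Proof.
elim: r => [|r IH].
  rewrite big_nat1 -[n in 'C(n, 0)]card_ord -card_draws.
  by apply: eq_card => Z; rewrite !inE leqn0.
rewrite big_nat_recr //= -IH -[n in 'C(n, _)]card_ord -card_draws -cardsUI.
rewrite (_ : _ :&: _ = set0) ?cards0 ?addn0.
  by apply: eq_card => Z; rewrite !inE leq_eqVlt ltnS orbC.
by apply/setP => Z; rewrite !inE; apply/negbTE/andP => -[+ /eqP ZE]; rewrite ZE ltnn.
Qed.

Lemma dim_avoid_span r : (\dim (avoid_span r) <= \sum_(0 <= i < r.+1) 'C(n, i))%N.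
Proof. by rewrite (leq_trans (dim_span _)) // size_map -cardE card_small_sets. Qed.

Lemma avoid_spanP r (Z : {set 'I_n}) : (#|Z| <= r)%N -> avoid Z \in avoid_span r.
Proof. by move=> Zr; apply/memv_span/map_f; rewrite mem_enum inE. Qed.

Lemma avoid_spanS r : (avoid_span r <= avoid_span r.+1)%VS.
Proof.
apply/span_subvP => f /mapP[Z]; rewrite mem_enum inE => Zr ->.
exact/avoid_spanP/(leq_trans Zr).
Qed.

Lemma avoidU Z Z' : avoid Z * avoid Z' = avoid (Z :|: Z').
Proof.
apply/ffunP => x; rewrite !ffunE setIUl setU_eq0.
by case: (Z :&: x == set0); case: (Z' :&: x == set0); rewrite ?mulr1 ?mulr0.
Qed.

Lemma avoid_span_mul1 r u i :
  u \in avoid_span r -> u * avoid [set i] \in avoid_span r.+1.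
Proof.
move=> uS; rewrite (coord_span uS) mulr_suml; apply: memv_suml => k _.
set X := map_tuple _ _; set c := coord X k u.
have /mapP[Z] : X`_k \in [seq avoid Z | Z <- enum (small_sets r)].
  by rewrite mem_nth // size_map -cardE.
rewrite mem_enum inE => Zr ->.
have -> : c *: avoid Z * avoid [set i] = c *: avoid (Z :|: [set i]).
  by rewrite -avoidU; apply/ffunP => x; rewrite !ffunE scalerAl.
by rewrite memvZ // avoid_spanP // setUC cardsU1; case: (i \in Z); rewrite ?ltnS ?(leq_trans Zr).
Qed.

Definition gap_fun (L : seq nat) (A : {set 'I_n}) : setfun :=
  [ffun x => (gap_prod L #|A :\: x|)%:~R].

Lemma card_setD_avoid (A x : {set 'I_n}) : #|A :\: x|%:R = \sum_(i in A) avoid [set i] x.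
Proof.
rewrite -sum1_card natr_sum [LHS]big_mkcond [RHS]big_mkcond /=; apply: eq_bigr => i _.
by rewrite in_setD ffunE setI_eq0 disjoints1; case: (i \in A); case: (i \in x).
Qed.

Lemma gap_fun_in_span L A : gap_fun L A \in avoid_span (size L).
Proof.
elim: L => [|l L IH].
  suff -> : gap_fun [::] A = avoid set0 by rewrite avoid_spanP ?cards0.
  by apply/ffunP => x; rewrite !ffunE /gap_prod big_nil set0I eqxx.
have -> : gap_fun (l :: L) A =
          \sum_(i in A) gap_fun L A * avoid [set i] - l%:R *: gap_fun L A.
  apply/ffunP => x; rewrite !ffunE sum_ffunE /gap_prod big_cons intrM intrB -!pmulrn.
  rewrite card_setD_avoid mulrBl mulr_suml; congr (_ - _).
  by apply: eq_bigr => i _; rewrite !ffunE mulrC.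
apply: memvB; last exact/memvZ/(subvP (avoid_spanS _)).
by apply: memv_suml => i _; apply: avoid_span_mul1.
Qed.

End AvoidSpan.

Section PadicRank.
Local Open Scope ring_scope.

Lemma Fp_intr_eq0 p (z : int) : prime p -> ((z%:~R : 'F_p) == 0) = (p %| z)%Z.
Proof.
move=> pp; rewrite {1}(intEsign z) rmorphM rmorph_sign /= mulf_eq0 signr_eq0 /=.
by rewrite -[(p %| z)%Z]/(p %| `|z|)%N -pmulrn (dvdn_pcharf (pchar_Fp pp)).
Qed.

(* Dividing out p ^ V leaves a matrix that is diagonal and invertible modulo p. *)
Lemma det_padic_diag_neq0 p V m (N : 'M[int]_m) : prime p ->
  (forall i, ((p ^ V)%N%:Z %| N i i)%Z && ~~ ((p ^ V.+1)%N%:Z %| N i i)%Z) ->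
  (forall i j, i != j -> ((p ^ V.+1)%N%:Z %| N i j)%Z) ->
  \det N != 0.
Proof.
move=> pp diagN offN; set P := (p ^ V)%N%:Z.
have P0 : P != 0 by rewrite /P -lt0n expn_gt0 prime_gt0.
have dvdN i j : (P %| N i j)%Z.
  have [->|ij] := eqVneq i j; first by case/andP: (diagN j).
  by apply: dvdz_trans (offN _ _ ij); rewrite dvdzE dvdn_exp2l.
have [D NE] : exists D, N = P *: D.
  by exists (\matrix_(i, j) (N i j %/ P)%Z); apply/matrixP => i j; rewrite !mxE mulrC divzK.
have pD i j : (p%:Z %| D i j)%Z = ((p ^ V.+1)%N%:Z %| N i j)%Z.
  by rewrite NE !mxE expnS PoszM [P * _]mulrC dvdz_mul2r.
rewrite NE detZ mulf_neq0 ?expf_neq0 //.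
suff : (\det D)%:~R != 0 :> 'F_p by apply: contraNneq => ->.
rewrite -det_map_mx (_ : map_mx intr D = diag_mx (\row_i ((D i i)%:~R : 'F_p))).
  rewrite det_diag prodf_seq_neq0; apply/allP => i _ /=.
  by rewrite mxE Fp_intr_eq0 // pD; case/andP: (diagN i).
apply/matrixP => i j; rewrite !mxE; have [->|ij] := eqVneq i j; first by rewrite mulr1n.
by rewrite mulr0n; apply/eqP; rewrite Fp_intr_eq0 // pD offN.
Qed.

Lemma card_le_dim_padic (T : finType) (U : {vspace {ffun T -> rat^o}}) (F : {set T})
    (M : T -> T -> int) p V :
  prime p ->
  (forall A, A \in F -> [ffun B => (M A B)%:~R] \in U) ->
  (forall A, A \in F -> ((p ^ V)%N%:Z %| M A A)%Z && ~~ ((p ^ V.+1)%N%:Z %| M A A)%Z) ->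
  (forall A B, A \in F -> B \in F -> A != B -> ((p ^ V.+1)%N%:Z %| M A B)%Z) ->
  (#|F| <= \dim U)%N.
Proof.
move=> pp MU diagM offM; set G := @enum_val _ (mem F).
set X := [tuple [ffun B => (M (G i) B)%:~R] : {ffun T -> rat^o} | i < #|F|].
have XU : (<<X>> <= U)%VS by apply/span_subvP => _ /mapP[i _ ->]; apply/MU/enum_valP.
suff /eqP dimX : free X by rewrite -[X in (X <= _)%N](size_tuple X) -dimX dimvS.
apply/freeP => k sumX0 i.
set N : 'M[int]_#|F| := \matrix_(i, j) M (G i) (G j).
have uN : map_mx (intr : int -> rat) N \in unitmx.
  rewrite unitmxE unitfE det_map_mx intr_eq0.
  apply: (det_padic_diag_neq0 (p := p) (V := V)) => // [i0|i0 j0 ij].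
    by rewrite mxE; apply/diagM/enum_valP.
  by rewrite mxE; apply: offM; rewrite ?enum_valP // (inj_eq enum_val_inj).
have kN : \row_i0 k i0 *m map_mx intr N = 0.
  apply/rowP => j; have /ffunP/(_ (G j)) := sumX0; rewrite !mxE sum_ffunE ffunE.
  by apply: etrans; apply: eq_bigr => i0 _; rewrite !mxE -tnth_nth tnth_mktuple !ffunE.
have /rowP/(_ i) : \row_i0 k i0 = 0 by rewrite -(mulmxK uN (\row_i0 k i0)) kN mul0mx.
by rewrite !mxE.
Qed.

End PadicRank.

Theorem mainTheorem3 (p k q a d s n : nat) (F : {set {set 'I_n}}) :
  prime p -> 0 < k -> q = p ^ k ->
  0 < a -> 0 < d -> 1 <= s ->
  (forall l, l \in arith_prog a d s -> (1 <= l) && (l <= q - 1)) ->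
  mod_L_diff_sperner q (arith_prog a d s) F ->
  \sum_(l <- arith_prog a d s) vp p l <
    maxn ((s - 1) * vp p d + vp p q) (s * vp p d + vp p s`! + 1) ->
  #|F| <= \sum_(0 <= i < s.+1) 'C(n, i).
Proof.
move=> pp _ -> a0 d0 s1 Lrange sper.
rewrite /vp big_arith_prog pfactorK // subn1 => Vlt.
have lastq : a + s.-1 * d < p ^ k.
  have /Lrange/andP[_] : a + s.-1 * d \in arith_prog a d s.
    by apply/mapP; exists s.-1 => //; rewrite mem_iota leq0n add0n ltn_predL.
  by move/leq_ltn_trans; apply; rewrite subn1 ltn_predL expn_gt0 prime_gt0.
apply: leq_trans (dim_avoid_span n s).
have sizeL : size (arith_prog a d s) = s by rewrite size_map size_iota.
apply: (@card_le_dim_padic _ _ F (fun A B => gap_prod (arith_prog a d s) #|A :\: B|) p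
          (\sum_(i < s) logn p (a + i * d)) pp) => [A _|A _|A B AF BF AB].
- by rewrite -[X in avoid_span _ X]sizeL; apply: gap_fun_in_span.
- by rewrite setDv cards0 gap_prod_prog0_pfactor.
- exact: dvdz_gap_prod_prog (sper A B AF BF AB) Vlt.
Qed.
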